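(* Let $G=(V,E)$ be a network with capacities $c_h>0$, and for each $t\in V$ let $E_t\subseteq E$ be the edge set of a DAG rooted at $t$. Let $\phi$ be a per-destination routing using, for each destination $t$, only edges of $E_t$, with induced fractions $f_{st}(\cdot)$, and let $r>0$. Suppose there exist weights $\pi_e(h)>0$ for every pair of edges $e,h\in E$ such that (R1) $\sum_{h\in E}\pi_e(h)c_h\le r$ for every $e\in E$, and (R2) for every edge $e=(u,v)\in E$, every pair $s,t$, and every directed path $(a_1,\dots,a_l)$ from $s$ to $t$ with $a_1,\dots,a_l\in E_t$, $f_{st}(u)\phi_t(u,v)\le c_e\sum_{k=1}^l\pi_e(a_k)$. Then for every demand matrix $D=(d_{st})$ that can be routed without exceeding the edge capacities by a flow sending each $d_{st}$ along $s$–$t$ paths whose edges all lie in $E_t$, we have $\sum_{s,t}d_{st}f_{st}(u)\phi_t(e)\le r\,c_e$ for every edge $e=(u,v)$; that is, $\phi$ has oblivious performance ratio at most $r$.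
   Context: A per-destination (PD) routing $\phi$ assigns to each destination $t$ and edge $e=(u,v)$ a fraction $\phi_t(e)\ge0$ of the flow to $t$ entering $u$ forwarded on $e$, with $\sum_{e=(u,v)}\phi_t(e)=1$ for $u\ne t$, such that the edges with $\phi_t(e)>0$ form no directed cycle. The induced fractions are $f_{st}(s)=1$ and $f_{st}(v)=\sum_{e=(u,v)}f_{st}(u)\phi_t(e)$ for $v\ne s$; under demand matrix $D$ the load on edge $e=(u,v)$ is $\sum_{s,t}d_{st}f_{st}(u)\phi_t(e)$. The oblivious performance ratio is the worst case, over all demand matrices, of the maximum link utilization of $\phi$ divided by the optimal achievable maximum link utilization (within the given DAGs). *)

From HB Require Import structures.
From mathcomp Require Import all_boot all_order all_algebra.
Set Implicit Arguments. Unset Strict Implicit. Unset Printing Implicit Defensive.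
Import Order.TTheory GRing.Theory Num.Theory.
Local Open Scope ring_scope.

Fixpoint is_walk (V : eqType) (E : Type) (src dst : E -> V)
    (x y : V) (p : seq E) : bool :=
  match p with
  | [::] => x == y
  | a :: p' => (src a == x) && is_walk src dst (dst a) y p'
  end.

Definition acyclic_edges (V : eqType) (E : eqType) (src dst : E -> V)
    (S : pred E) : Prop :=
  forall (x : V) (p : seq E), p != [::] -> is_walk src dst x x p -> ~~ all S p.

Definition dag_rooted_at (V : eqType) (E : eqType) (src dst : E -> V)
    (S : pred E) (t : V) : Prop :=
  acyclic_edges src dst S /\
  forall v : V, exists p : seq E, is_walk src dst v t p && all S p.

(* Per-destination routing phi (phi t e = fraction of flow to t entering
   src e that is forwarded on e). *)
Definition pd_routing (R : numDomainType) (V E : finType) (src dst : E -> V)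
    (phi : V -> E -> R) : Prop :=
  (forall t e, 0 <= phi t e) /\
  (forall t u, u != t -> \sum_(e | src e == u) phi t e = 1) /\
  (forall t, acyclic_edges src dst (fun e => 0 < phi t e)).

Definition induced_fractions (R : numDomainType) (V E : finType)
    (src dst : E -> V) (phi : V -> E -> R) (f : V -> V -> V -> R) : Prop :=
  forall s t : V, f s t s = 1 /\
    forall v : V, v != s ->
      f s t v = \sum_(e | dst e == v) f s t (src e) * phi t e.

(* Demand matrix d is routable within capacities c by a path flow sending
   each d s t along directed s-t paths whose edges all lie in Et t:
   P s t is a finite list of (amount, path) pairs. *)
Definition routable (R : numDomainType) (V E : finType) (src dst : E -> V)
    (c : E -> R) (Et : V -> {set E}) (d : V -> V -> R) : Prop :=
  exists P : V -> V -> seq (R * seq E),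
    (forall s t, all (fun wp => (0 <= wp.1) && is_walk src dst s t wp.2
                                 && all (fun a => a \in Et t) wp.2) (P s t)) /\
    (forall s t, \sum_(wp <- P s t) wp.1 = d s t) /\
    (forall e : E,
       \sum_s \sum_t \sum_(wp <- P s t) wp.1 * (count_mem e wp.2)%:R <= c e).

From HB Require Import structures.
From mathcomp Require Import all_boot all_order all_algebra.
Set Implicit Arguments. Unset Strict Implicit. Unset Printing Implicit Defensive.
Import Order.TTheory GRing.Theory Num.Theory.
Local Open Scope ring_scope.

(* This is the easy direction of LP duality.  Route D with the path flow
   witnessing routability.  By (R2), each unit of d_st contributes to the load
   of phi on e at most c_e times the pi_e-length of any path it uses in the
   flow, so the load of phi on e is at most c_e * sum_h pi_e(h) * load(h).
   The flow respects capacities, so this is at most c_e * sum_h pi_e(h) c_h,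
   which is at most r c_e by (R1). *)

Lemma sum_seq_count_mem (R : pzSemiRingType) (E : finType) (F : E -> R)
    (p : seq E) :
  \sum_(a <- p) F a = \sum_h F h * (count_mem h p)%:R.
Proof.
elim: p => [|a p IHp]; first by rewrite big_nil big1 // => h _; rewrite mulr0.
rewrite big_cons IHp (bigD1 a) //= [RHS](bigD1 a) //= eqxx natrD mulrDr addrA.
congr (_ + _); first by rewrite mulr1 addrC.
by apply: eq_bigr => h /negbTE; rewrite eq_sym => ->.
Qed.

Lemma ler_sum_weighted (R : numDomainType) (I : eqType) (r : seq I)
    (w y : I -> R) (x : R) :
  {in r, forall i, 0 <= w i /\ x <= y i} ->
  (\sum_(i <- r) w i) * x <= \sum_(i <- r) w i * y i.
Proof.
move=> wy; rewrite mulr_suml !big_seq; apply: ler_sum => i /wy[w_ge0 xy].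
exact: ler_wpM2l.
Qed.

Section PathFlow.

Variables (R : numDomainType) (V E : finType) (P : V -> V -> seq (R * seq E)).

Definition edge_load (h : E) : R :=
  \sum_s \sum_t \sum_(wp <- P s t) wp.1 * (count_mem h wp.2)%:R.

Lemma sum_path_lengthsE (w : E -> R) :
  \sum_s \sum_t \sum_(wp <- P s t) wp.1 * \sum_(a <- wp.2) w a
  = \sum_h w h * edge_load h.
Proof.
transitivity (\sum_h \sum_s \sum_t \sum_(wp <- P s t)
                w h * (wp.1 * (count_mem h wp.2)%:R)); last first.
  apply: eq_bigr => h _; rewrite mulr_sumr; apply: eq_bigr => s _.
  by rewrite mulr_sumr; apply: eq_bigr => t _; rewrite mulr_sumr.
rewrite [RHS]exchange_big; apply: eq_bigr => s _.
rewrite [RHS]exchange_big; apply: eq_bigr => t _.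
rewrite [RHS]exchange_big; apply: eq_bigr => wp _.
by rewrite sum_seq_count_mem mulr_sumr; apply: eq_bigr => h _; rewrite mulrCA.
Qed.

Lemma path_flow_cost_le (w : E -> R) (cost : V -> V -> R) (c : E -> R) :
  (forall s t, all (fun wp => 0 <= wp.1) (P s t)) ->
  (forall s t wp, wp \in P s t -> cost s t <= \sum_(a <- wp.2) w a) ->
  (forall h, 0 <= w h) ->
  (forall h, edge_load h <= c h) ->
  \sum_s \sum_t (\sum_(wp <- P s t) wp.1) * cost s t <= \sum_h w h * c h.
Proof.
move=> P_ge0 cost_le w_ge0 load_le.
apply: (@le_trans _ _ (\sum_h w h * edge_load h)); last first.
  by apply: ler_sum => h _; apply: ler_wpM2l.
rewrite -sum_path_lengthsE; apply: ler_sum => s _; apply: ler_sum => t _.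
apply: ler_sum_weighted => wp wp_in; split; last exact: cost_le.
by move/allP: (P_ge0 s t) => /(_ wp wp_in).
Qed.

End PathFlow.

Theorem theorem3 (R : realFieldType) (V E : finType) (src dst : E -> V)
    (c : E -> R) (Et : V -> {set E}) (phi : V -> E -> R)
    (f : V -> V -> V -> R) (r : R) (pi : E -> E -> R) :
  (forall h, 0 < c h) ->
  (forall t, dag_rooted_at src dst (mem (Et t)) t) ->
  pd_routing src dst phi ->
  (forall t e, 0 < phi t e -> e \in Et t) ->
  induced_fractions src dst phi f ->
  0 < r ->
  (forall e h, 0 < pi e h) ->
  (forall e, \sum_h pi e h * c h <= r) ->
  (forall e s t (p : seq E), is_walk src dst s t p ->
     all (fun a => a \in Et t) p ->
     f s t (src e) * phi t e <= c e * \sum_(a <- p) pi e a) ->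
  forall d : V -> V -> R,
    (forall s t, 0 <= d s t) ->
    routable src dst c Et d ->
    forall e : E,
      \sum_s \sum_t d s t * f s t (src e) * phi t e <= r * c e.
Proof.
move=> c_gt0 _ _ _ _ _ pi_gt0 R1 R2 d _ [P [P_ok [P_demand P_cap]]] e.
have P_ge0 s t : all (fun wp => 0 <= wp.1) (P s t).
  by apply: sub_all (P_ok s t) => wp /andP[/andP[]].
have cost_le s t wp : wp \in P s t ->
    f s t (src e) * phi t e <= \sum_(a <- wp.2) c e * pi e a.
  move/allP: (P_ok s t) => /[apply] /andP[/andP[_ walk] inEt].
  by rewrite -mulr_sumr; apply: R2.
under eq_bigr => s _ do under eq_bigr => t _ do rewrite -mulrA -P_demand.
have w_ge0 h : 0 <= c e * pi e h by rewrite mulr_ge0 // ltW.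
apply: le_trans (path_flow_cost_le P_ge0 cost_le w_ge0 P_cap) _.
under eq_bigr => h _ do rewrite -mulrA.
by rewrite -mulr_sumr mulrC ler_wpM2r // ltW.
Qed.
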